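(* In the construction described in the context, for every $i\in\{1,\dots,t-1\}$ we have $C_i\subseteq F$.
   Context: Setting: $G=(V,E)$ is a connected finite undirected graph (parallel edges allowed), $w:E\to\mathbb{R}_{\ge0}$ edge weights, $c:E\to\mathbb{R}_{>0}$ edge costs, $n=|V|$. For $S\subseteq V$, $C_G(S)=\{e\in E:|e\cap S|=1\}$ (complete cut; its edges cross it) and $C_G(S,W)=\{e\in C_G(S):w(e)<W\}$ (partial cut). $F\subseteq E$ is a set with $G'=G\setminus F=(V,E\setminus F)$ connected; $B=c(F)$ and $\Delta=\mathrm{MST}(G')-\mathrm{MST}(G)$ (MST weights w.r.t. $w$). Construction: let $T$ be a minimum spanning tree of $G$ and $T\cap F=\{e_1,\dots,e_{t-1}\}$, with $t\ge2$. Removing these edges splits $T$ into components with vertex sets $A_1,\dots,A_t$ (a partition of $V$). Let $G'_{cc}$ be the multigraph with vertex set $V_{cc}=\{A_1,\dots,A_t\}$ having, for every edge $\{u,v\}\in E\setminus F$ with $u\in A_i$, $v\in A_j$, an edge between $A_i$ and $A_j$ of weight $w(\{u,v\})$ (identified with the original edge). Let $T'_{cc}$ be a minimum spanning tree of $G'_{cc}$, with edges $e'_1,\dots,e'_{t-1}$ indexed so that $w(e'_1)\le\dots\le w(e'_{t-1})$ (ties broken arbitrarily). For each $i$, deleting $e'_i,e'_{i+1},\dots,e'_{t-1}$ from $T'_{cc}$ leaves a forest in which $e'_i$ joins two components $L_i,R_i\subseteq V_{cc}$. Counters $k(A)=0$ for all $A\in V_{cc}$ initially, and $k(S)=\max_{A\in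 S}k(A)$. For $i=1,\dots,t-1$ in order: set $X_i=L_i$ if $k(L_i)\le k(R_i)$, else $X_i=R_i$; then increase $k(A)$ by $1$ for every $A\in X_i$. Identifying a set of vertices of $G'_{cc}$ with the union of the corresponding vertex sets in $V$, define $C_i=C_G(X_i,w(e'_i))$. *)

From HB Require Import structures.
From mathcomp Require Import all_boot all_order all_algebra.
Set Implicit Arguments. Unset Strict Implicit. Unset Printing Implicit Defensive.
Import Order.TTheory GRing.Theory Num.Theory.
Local Open Scope ring_scope.

(* A finite multigraph is given by a vertex type Vt, an edge-identifier type Et
   and an endpoint map ends : Et -> Vt * Vt (orientation is irrelevant:
   everything below is symmetric in the two endpoints). *)
Section Multigraph.
Variables (Vt Et : finType) (ends : Et -> Vt * Vt).

Definition adj (S : {set Et}) : rel Vt :=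
  fun u v => [exists e in S, (ends e == (u, v)) || (ends e == (v, u))].

Definition connected_on (Vs : {set Vt}) (S : {set Et}) : Prop :=
  forall u v, u \in Vs -> v \in Vs -> connect (adj S) u v.

(* S is acyclic: no edge of S lies on a cycle of S (loops are cycles) *)
Definition is_forest (S : {set Et}) : Prop :=
  forall e, e \in S -> ~~ connect (adj (S :\ e)) (ends e).1 (ends e).2.

Definition spanning_tree (Vs : {set Vt}) (Es T : {set Et}) : Prop :=
  [/\ T \subset Es, connected_on Vs T & is_forest T].

Variables (R : numDomainType) (w : Et -> R).

Definition tweight (T : {set Et}) : R := \sum_(e in T) w e.

Definition is_MST (Vs : {set Vt}) (Es T : {set Et}) : Prop :=
  spanning_tree Vs Es T /\
  forall T', spanning_tree Vs Es T' -> tweight T <= tweight T'.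

Definition cut (S : {set Vt}) : {set Et} :=
  [set e | ((ends e).1 \in S) != ((ends e).2 \in S)].

Definition pcut (S : {set Vt}) (W : R) : {set Et} :=
  [set e in cut S | w e < W].
End Multigraph.

Section Construction.
Variables (V E : finType) (ends : E -> V * V) (T F : {set E}).

Definition comp (v : V) : {set V} := [set u | connect (adj ends (T :\: F)) v u].

Definition Vcc : {set {set V}} := [set comp v | v : V].

(* endpoints of an edge in the contracted multigraph G'_cc (edge set E \ F) *)
Definition ends_cc (e : E) : {set V} * {set V} := (comp (ends e).1, comp (ends e).2).

(* components L, R (sets of vertices of G'_cc) of the forest formed by the
   edges [pre] = e'_1, ..., e'_{i-1}, containing the two endpoints of e = e'_i *)
Definition Lset (pre : seq E) (e : E) : {set {set V}} :=
  [set A in Vcc | connect (adj ends_cc [set x in pre]) (ends_cc e).1 A].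
Definition Rset (pre : seq E) (e : E) : {set {set V}} :=
  [set A in Vcc | connect (adj ends_cc [set x in pre]) (ends_cc e).2 A].

Definition kmax (k : {set V} -> nat) (S : {set {set V}}) : nat :=
  (\max_(A in S) k A)%N.

Definition choose_X (k : {set V} -> nat) (L R : {set {set V}}) : {set {set V}} :=
  if (kmax k L <= kmax k R)%N then L else R.

Fixpoint steps (k : {set V} -> nat) (pre rest : seq E)
  : seq (E * {set {set V}}) :=
  match rest with
  | [::] => [::]
  | e :: rest' =>
      let X := choose_X k (Lset pre e) (Rset pre e) in
      (e, X) :: steps (fun A => (k A + (A \in X))%N) (rcons pre e) rest'
  end.

Definition counter_steps (s : seq E) := steps (fun _ => 0%N) [::] s.

(* identification of a set of vertices of G'_cc with a set of vertices of G *)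
Definition union_cc (X : {set {set V}}) : {set V} := \bigcup_(A in X) A.
End Construction.

From Pilot Require Import Defs.
From HB Require Import structures.
From mathcomp Require Import all_boot all_order all_algebra.
Set Implicit Arguments. Unset Strict Implicit. Unset Printing Implicit Defensive.
Import Order.TTheory GRing.Theory Num.Theory.
Local Open Scope ring_scope.

(* X_i is the component, in the forest P = {e'_1, ..., e'_{i-1}} of T'_cc, of
   an endpoint of e'_i.  An edge f of G' crossing X_i therefore joins two
   P-components, and the cycle property of the minimum spanning tree T'_cc
   yields an edge g of T'_cc outside P with w g <= w f.  Since the edges of
   T'_cc outside P are e'_i, ..., e'_{t-1}, all of weight at least w e'_i, we
   get w f >= w e'_i: no edge of the partial cut C_i lies outside F. *)

Section Multigraph.
Variables (Vt Et : finType) (ends : Et -> Vt * Vt).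

Lemma adj_sym (S : {set Et}) : symmetric (adj ends S).
Proof.
by move=> u v; apply/existsP/existsP => -[e /andP[eS h]]; exists e; rewrite eS orbC.
Qed.

Lemma connect_adj_sym (S : {set Et}) : connect_sym (adj ends S).
Proof. exact/sym_connect_sym/adj_sym. Qed.

Lemma adj_edge (S : {set Et}) e : e \in S -> adj ends S (ends e).1 (ends e).2.
Proof. by move=> eS; apply/existsP; exists e; rewrite eS -surjective_pairing eqxx. Qed.

Lemma connect_adj_subset (S S' : {set Et}) :
  S \subset S' -> subrel (connect (adj ends S)) (connect (adj ends S')).
Proof.
move=> sSS'; apply: connect_sub => u v /existsP[e /andP[eS h]].
by apply/connect1/existsP; exists e; rewrite (subsetP sSS').
Qed.

Lemma connect_adj_exchange (S S' : {set Et}) g :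
  S \subset g |: S' -> connect (adj ends S') (ends g).1 (ends g).2 ->
  subrel (connect (adj ends S)) (connect (adj ends S')).
Proof.
move=> sS hg; apply: connect_sub => u v /existsP[e /andP[eS h]].
have /setU1P[eg | eS'] := subsetP sS e eS; last first.
  by apply/connect1/existsP; exists e; rewrite eS'.
by subst e; case/orP: h => /eqP E; rewrite E in hg; rewrite // connect_adj_sym.
Qed.

Lemma connected_sub_spanning_tree (Vs : {set Vt}) (Es S : {set Et}) :
  S \subset Es -> connected_on ends Vs S ->
  exists2 T, spanning_tree ends Vs Es T & T \subset S.
Proof.
elim: {S}_.+1 {-2}S (ltnSn #|S|) => // n IH S ltSn sSEs conS.
case: (boolP [exists e in S, connect (adj ends (S :\ e)) (ends e).1 (ends e).2]).
- case/existsP=> e /andP[eS he].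
  have [|||T treeT sTS] := IH (S :\ e).
  + by rewrite -ltnS (leq_trans _ ltSn) // ltnS (cardsD1 e S) eS.
  + exact: subset_trans (subsetDl _ _) sSEs.
  + move=> u v uVs vVs; apply: (connect_adj_exchange _ he (conS u v uVs vVs)).
    by rewrite setD1K.
  by exists T => //; apply: subset_trans sTS (subsetDl _ _).
- move=> noCycle; exists S => //; split=> // e eS; apply: contra noCycle => he.
  by apply/existsP; exists e; rewrite eS.
Qed.

(* g is the edge by which the walk leaves the P-component of a for the last
   time; the remaining walk stays outside, so it cannot use g. *)
Lemma path_last_exit (S P : {set Et}) a x (p : seq Vt) :
  path (adj ends S) x p -> connect (adj ends P) a x ->
  ~~ connect (adj ends P) a (last x p) ->
  exists g u v, [/\ g \in S :\: P, (ends g == (u, v)) || (ends g == (v, u)),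
    connect (adj ends P) a u & connect (adj ends (S :\ g)) v (last x p)].
Proof.
elim/last_ind: p => [|q z IH] /=; first by move=> _ ->.
rewrite rcons_path last_rcons => /andP[pq /existsP[e /andP[eS he]]] ax az.
have [ay | ny] := boolP (connect (adj ends P) a (last x q)).
  exists e, (last x q), z; split=> //; rewrite inE eS andbT.
  apply: contra az => eP; apply: connect_trans ay (connect1 _).
  by apply/existsP; exists e; rewrite eP.
have [g [u [v [gSP hg au vy]]]] := IH pq ax ny.
exists g, u, v; split=> //; apply: connect_trans vy (connect1 _).
apply/existsP; exists e; rewrite he andbT !inE eS andbT.
apply: contraNneq (ny) => eg; rewrite eg in he.
suff [<- // | uz] : u = last x q \/ u = z by rewrite -uz au in az.
by case/orP: hg he => /eqP-> /orP[] /eqP[E1 E2]; auto.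
Qed.

Variables (R : realDomainType) (w : Et -> R).
Hypothesis w_ge0 : forall e, 0 <= w e.

Lemma tweight_subset (A B : {set Et}) : A \subset B -> tweight w A <= tweight w B.
Proof.
move=> sAB; rewrite /tweight [X in _ <= X](big_setID A) /= (setIidPr sAB) lerDl.
exact: sumr_ge0.
Qed.

Lemma tweight_setU1 (S : {set Et}) f : tweight w (f |: S) <= tweight w S + w f.
Proof.
have [fS | fS] := boolP (f \in S); first by rewrite (setUidPr _) ?sub1set // lerDl.
by rewrite /tweight big_setU1 //= addrC.
Qed.

(* Cycle property: otherwise the Tr-path between the ends of f leaves their
   P-component through an edge g heavier than f, and f |: (Tr :\ g) contains
   a lighter spanning tree. *)
Lemma MST_exchange (Vs : {set Vt}) (Es Tr P : {set Et}) f :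
  is_MST ends w Vs Es Tr -> P \subset Tr -> f \in Es ->
  (ends f).1 \in Vs -> (ends f).2 \in Vs ->
  ~~ connect (adj ends P) (ends f).1 (ends f).2 ->
  exists2 g, g \in Tr :\: P & w g <= w f.
Proof.
move=> [[sTrEs conTr _] minTr] sPTr fEs aVs bVs nab.
apply/exists_inP; apply: contraT; rewrite negb_exists_in => /forall_inP gt_gf.
have /connectP[p pTr bE] := conTr _ _ aVs bVs.
rewrite bE in nab.
have [g [u [v [gTrP hg au vb]]]] := path_last_exit pTr (connect0 _ _) nab.
rewrite -bE in vb; move: (gTrP); rewrite inE => /andP[gP gTr].
set T' := f |: (Tr :\ g).
have sPT' : P \subset T'.
  apply/subsetP=> e eP; rewrite !inE (subsetP sPTr) // andbT.
  by apply/orP; right; apply: contraNneq gP => <-.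
have uv : connect (adj ends T') u v.
  apply: connect_trans (connect_trans _ (connect1 (adj_edge (setU11 f _)))) _.
    by rewrite connect_adj_sym (connect_adj_subset sPT').
  by rewrite connect_adj_sym (connect_adj_subset (subsetUr _ _)).
have conT' : connected_on ends Vs T'.
  move=> x y xVs yVs; apply: (connect_adj_exchange (g := g)) (conTr x y xVs yVs).
    by rewrite /T' setUCA setD1K // subsetUr.
  by case/orP: hg => /eqP ->; rewrite // connect_adj_sym.
have sT'Es : T' \subset Es.
  by apply/subsetP=> e /setU1P[-> // | /setD1P[_ /(subsetP sTrEs)]].
have [T2 treeT2 sT2T'] := connected_sub_spanning_tree sT'Es conT'.
have := le_trans (minTr _ treeT2) (le_trans (tweight_subset sT2T') (tweight_setU1 _ f)).
by rewrite /tweight (big_setD1 g gTr) /= addrC lerD2l (negPf (gt_gf g gTrP)).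
Qed.

End Multigraph.

Section Construction.
Variables (V E : finType) (ends : E -> V * V) (T F : {set E}).

Lemma comp_eq_of_mem u v :
  u \in Defs.comp ends T F v -> Defs.comp ends T F u = Defs.comp ends T F v.
Proof.
rewrite inE => vu; apply/setP => x; rewrite !inE.
by rewrite -(same_connect (connect_adj_sym ends (T :\: F)) vu) connect_adj_sym.
Qed.

Lemma mem_union_cc (Q : pred {set V}) u :
  (u \in union_cc [set A in Vcc ends T F | Q A]) = Q (Defs.comp ends T F u).
Proof.
apply/bigcupP/idP => [[A] | QAu].
  by rewrite inE => /andP[/imsetP[v _ ->] QA] /comp_eq_of_mem ->.
exists (Defs.comp ends T F u); last by rewrite inE connect0.
by rewrite inE QAu andbT imset_f.
Qed.

Lemma choose_X_component k pre e : exists z,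
  choose_X k (Lset ends T F pre e) (Rset ends T F pre e) =
  [set A in Vcc ends T F | connect (adj (ends_cc ends T F) [set x in pre]) z A].
Proof. by rewrite /choose_X; case: ifP; eexists. Qed.

Lemma mem_steps k pre rest p : p \in steps ends T F k pre rest ->
  exists k' l1 e l2, rest = l1 ++ e :: l2 /\
    p = (e, choose_X k' (Lset ends T F (pre ++ l1) e) (Rset ends T F (pre ++ l1) e)).
Proof.
elim: rest k pre => [|e rest IH] k pre //=; rewrite in_cons => /predU1P[-> |].
  by exists k, [::], e, rest; rewrite cats0.
move/IH => [k' [l1 [e' [l2 [-> ->]]]]]; exists k', (e :: l1), e', l2.
by rewrite -cats1 -catA.
Qed.

End Construction.

Theorem mainTheorem8 (R : realDomainType) (V E : finType) (ends : E -> V * V)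
    (w : E -> R) (c : E -> R) (F T Tcc : {set E}) (s : seq E) :
  (forall e, (ends e).1 != (ends e).2) ->
  connected_on ends setT setT ->
  (forall e, 0 <= w e) -> (forall e, 0 < c e) ->
  connected_on ends setT (~: F) ->
  is_MST ends w setT setT T ->
  T :&: F != set0 -> (* t >= 2 *)
  is_MST (ends_cc ends T F) w (Vcc ends T F) (~: F) Tcc ->
  uniq s -> [set x in s] = Tcc ->
  sorted (fun a b => w a <= w b) s -> (* s = e'_1, ..., e'_{t-1} *)
  forall p, p \in counter_steps ends T F s -> (* p = (e'_i, X_i) *)
    pcut ends w (union_cc p.2) (w p.1) \subset F.
Proof.
move=> _ _ w_ge0 _ _ _ _ mstTcc _ sTcc sorted_s p /mem_steps[k [l1 [e [l2 [sE ->]]]]].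
have [z ->] := choose_X_component ends T F k l1 e.
set P := [set x in l1].
apply/subsetP => f; rewrite !inE !mem_union_cc => /andP[cross lt_fe].
apply: contraT => fF.
have sPTcc : P \subset Tcc by apply/subsetP => x; rewrite -sTcc !inE sE mem_cat => ->.
have fG' : f \in ~: F by rewrite inE.
have nconn : ~~ connect (adj (ends_cc ends T F) P) (ends_cc ends T F f).1 (ends_cc ends T F f).2.
  by apply: contra cross => /(same_connect_r (connect_adj_sym _ _)) ->.
have [g] := MST_exchange w_ge0 mstTcc sPTcc fG' (imset_f _ isT) (imset_f _ isT) nconn.
rewrite -sTcc !inE sE mem_cat => /andP[/negPf -> /= ge] le_gf.
have le_eg : w e <= w g.
  have w_trans : transitive (fun a b : E => w a <= w b).
    by move=> y x u; apply: le_trans.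
  move: sorted_s; rewrite sE sorted_cat_cons => /andP[_ /(order_path_min w_trans)].
  by move: ge; rewrite in_cons => /predU1P[-> | /[swap] /allP/[apply]].
by move: (le_trans le_eg le_gf); rewrite leNgt lt_fe.
Qed.
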